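(* Let $\delta,\varepsilon\in[0,1)$, let $\mathscr{H},\mathscr{K}$ be complex inner product spaces and let $T:\mathscr{H}\to\mathscr{K}$ be a linear $(\delta,\varepsilon)$-orthogonality preserving mapping. If $\eta,\zeta\in\mathscr{H}\setminus\{0\}$ are orthogonal, then $$\sqrt{\frac{(1-\delta)(1-\varepsilon)}{(1+\delta)(1+\varepsilon)}}\,\|T\zeta\|\,\|\eta\|\leq\|T\eta\|\,\|\zeta\|\leq\sqrt{\frac{(1-\delta)(1+\varepsilon)}{(1+\delta)(1-\varepsilon)}}\,\|T\zeta\|\,\|\eta\|.$$
   Context: A mapping $T:\mathscr{H}\to\mathscr{K}$ between inner product spaces is $(\delta,\varepsilon)$-orthogonality preserving if for all $\eta,\zeta\in\mathscr{H}$, $|(\eta,\zeta)|\leq\delta\|\eta\|\,\|\zeta\|$ implies $|(T\eta,T\zeta)|\leq\varepsilon\|T\eta\|\,\|T\zeta\|$. *)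

From HB Require Import structures.
From mathcomp Require Import all_boot all_order all_algebra.
From mathcomp Require Import reals.
From mathcomp.real_closed Require Import complex.
Set Implicit Arguments. Unset Strict Implicit. Unset Printing Implicit Defensive.
Import Order.TTheory GRing.Theory Num.Theory.
Local Open Scope ring_scope.
Local Open Scope complex_scope.

Definition is_inner_product (R : realType) (V : lmodType R[i])
    (ip : V -> V -> R[i]) : Prop :=
  [/\ forall (a : R[i]) (x y z : V), ip (a *: x + y) z = a * ip x z + ip y z,
      forall x y : V, ip y x = (ip x y)^*,
      forall x : V, 0 <= ip x x
    & forall x : V, ip x x = 0 -> x = 0].

Definition ipnorm (R : realType) (V : lmodType R[i]) (ip : V -> V -> R[i])
    (x : V) : R[i] := sqrtC (ip x x).

Definition de_orth_preserving (R : realType) (V W : lmodType R[i])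
    (ipV : V -> V -> R[i]) (ipW : W -> W -> R[i]) (delta eps : R)
    (T : V -> W) : Prop :=
  forall eta zeta : V,
    `|ipV eta zeta| <= delta%:C * ipnorm ipV eta * ipnorm ipV zeta ->
    `|ipW (T eta) (T zeta)| <= eps%:C * ipnorm ipW (T eta) * ipnorm ipW (T zeta).

From HB Require Import structures.
From mathcomp Require Import all_boot all_order all_algebra.
From mathcomp Require Import reals.
From mathcomp.real_closed Require Import complex.
From mathcomp Require Import ring lra.
Set Implicit Arguments. Unset Strict Implicit. Unset Printing Implicit Defensive.
Import Order.TTheory GRing.Theory Num.Theory.
Local Open Scope ring_scope.
Local Open Scope complex_scope.

(* For orthogonal x and y, the vectors x + y and x - y have equal norms and
   inner product |x|^2 - |y|^2, so the delta-hypothesis applies to them as soon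
   as | |x|^2 - |y|^2 | <= delta (|x|^2 + |y|^2).  Bounding the real part of
   (T(x + y), T(x - y)) by its modulus, the product of norms by their mean and
   using the parallelogram law, the eps-conclusion becomes
   | |Tx|^2 - |Ty|^2 | <= eps (|Tx|^2 + |Ty|^2).  With
   x = sqrt(1 + delta) |zeta| eta and y = sqrt(1 - delta) |eta| zeta the first
   inequality is an equality, and the second rearranges into both bounds. *)

Lemma sqrtC_real (R : rcfType) (r : R) :
  0 <= r -> sqrtC (r%:C : R[i]) = (Num.sqrt r)%:C.
Proof. by move=> r_ge0; rewrite -{1}(sqr_sqrtr r_ge0) rmorphXn sqrCK ?ler0c ?sqrtr_ge0. Qed.

Lemma normc_real (R : rcfType) (r : R) : `|r%:C : R[i]| = `|r|%:C.
Proof. by rewrite normc_def /= expr0n addr0 sqrtr_sqr. Qed.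

Section InnerProduct.
Variables (R : realType) (V : lmodType R[i]) (ip : V -> V -> R[i]).
Hypothesis ip_inner : is_inner_product ip.

Lemma ipDl x y z : ip (x + y) z = ip x z + ip y z.
Proof. by case: ip_inner => linl _ _ _; have := linl 1 x y z; rewrite scale1r mul1r. Qed.

Lemma ipZl a x z : ip (a *: x) z = a * ip x z.
Proof.
have ip0l : ip 0 z = 0 by apply: (addrI (ip 0 z)); rewrite addr0 -ipDl addr0.
by case: ip_inner => linl _ _ _; rewrite -[a *: x]addr0 linl ip0l addr0.
Qed.

Lemma ipC x y : ip x y = (ip y x)^*.
Proof. by case: ip_inner. Qed.

Lemma ipDr x y z : ip z (x + y) = ip z x + ip z y.
Proof. by rewrite ipC ipDl rmorphD /= -!ipC. Qed.

Lemma ipZr a x z : ip z (a *: x) = a^*%C * ip z x.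
Proof. by rewrite ipC ipZl rmorphM /= -ipC. Qed.

Lemma ipNl x z : ip (- x) z = - ip x z.
Proof. by rewrite -scaleN1r ipZl mulN1r. Qed.

Lemma ipNr x z : ip z (- x) = - ip z x.
Proof. by rewrite -scaleN1r ipZr rmorphN1 mulN1r. Qed.

Definition sqnorm x : R := complex.Re (ip x x).

Lemma ip_sqnorm x : ip x x = (sqnorm x)%:C.
Proof. by case: ip_inner => _ _ ge0 _; rewrite RRe_real ?ger0_real. Qed.

Lemma sqnorm_ge0 x : 0 <= sqnorm x.
Proof. by case: ip_inner => _ _ ge0 _; rewrite -ler0c -ip_sqnorm. Qed.

Lemma ipnormE x : ipnorm ip x = (Num.sqrt (sqnorm x))%:C.
Proof. by rewrite /ipnorm ip_sqnorm sqrtC_real ?sqnorm_ge0. Qed.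

Lemma sqnormZ (r : R) x : sqnorm (r%:C *: x) = r ^+ 2 * sqnorm x.
Proof. by rewrite /sqnorm ipZl ipZr conjc_real ip_sqnorm -!rmorphM mulrA -expr2. Qed.

Lemma Re_ip_sum_diff x y : complex.Re (ip (x + y) (x - y)) = sqnorm x - sqnorm y.
Proof.
rewrite !ipDl !ipDr !ipNr !ip_sqnorm [ip y x]ipC.
by case: (ip x y) => a b; simpc; rewrite /=; lra.
Qed.

Lemma parallelogram_law x y :
  sqnorm (x + y) + sqnorm (x - y) = 2 * (sqnorm x + sqnorm y).
Proof.
apply: complexI; rewrite rmorphM !rmorphD !rmorph1 /= -!ip_sqnorm.
by rewrite !ipDl !ipDr !ipNl !ipNr; ring.
Qed.

Section Orthogonal.
Variables x y : V.
Hypothesis xy_orth : ip x y = 0.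

Lemma ip_sum_diff_orth : ip (x + y) (x - y) = (sqnorm x - sqnorm y)%:C.
Proof.
by rewrite !ipDl !ipDr !ipNr [ip y x]ipC xy_orth conjc0 !ip_sqnorm rmorphB; ring.
Qed.

Lemma sqnormD_orth : sqnorm (x + y) = sqnorm x + sqnorm y.
Proof.
apply: complexI; rewrite rmorphD /= -!ip_sqnorm !ipDl !ipDr [ip y x]ipC xy_orth.
by rewrite conjc0 addr0 add0r.
Qed.

Lemma sqnormB_orth : sqnorm (x - y) = sqnorm x + sqnorm y.
Proof.
have := parallelogram_law x y; rewrite sqnormD_orth; lra.
Qed.

End Orthogonal.
End InnerProduct.

Lemma mul_sqrtr_le_mean (R : rcfType) (a b : R) :
  0 <= a -> 0 <= b -> Num.sqrt a * Num.sqrt b <= (a + b) / 2.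
Proof.
move=> a_ge0 b_ge0; rewrite -{2}(sqr_sqrtr a_ge0) -{2}(sqr_sqrtr b_ge0).
exact: (leif_mean_square _ _).1.
Qed.

Section OrthogonalityPreserving.
Variables (R : realType) (delta eps : R) (V W : lmodType R[i]).
Variables (ipV : V -> V -> R[i]) (ipW : W -> W -> R[i]) (T : {linear V -> W}).
Hypotheses (ipV_inner : is_inner_product ipV) (ipW_inner : is_inner_product ipW).
Hypothesis T_pres : de_orth_preserving ipV ipW delta eps T.

Lemma sqnorm_gap_orth x y : 0 <= eps -> ipV x y = 0 ->
  `|sqnorm ipV x - sqnorm ipV y| <= delta * (sqnorm ipV x + sqnorm ipV y) ->
  `|sqnorm ipW (T x) - sqnorm ipW (T y)|
    <= eps * (sqnorm ipW (T x) + sqnorm ipW (T y)).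
Proof.
move=> eps_ge0 xy_orth gap_xy.
have := @T_pres (x + y) (x - y).
rewrite ip_sum_diff_orth // !ipnormE // sqnormD_orth // sqnormB_orth //.
rewrite normc_real -!rmorphM lecR -mulrA -expr2 sqr_sqrtr ?addr_ge0 ?sqnorm_ge0 //.
move=> /(_ gap_xy); rewrite linearD linearB /=.
move=> /(le_trans (normc_ge_Re _)); rewrite lecR Re_ip_sum_diff // => gap_T.
apply: (le_trans gap_T); rewrite -mulrA ler_wpM2l //.
apply: le_trans (mul_sqrtr_le_mean (sqnorm_ge0 _ _) (sqnorm_ge0 _ _)) _ => //.
by rewrite parallelogram_law //; lra.
Qed.

Lemma orth_sqnorm_ratio_bounds eta zeta :
  0 <= delta < 1 -> 0 <= eps < 1 -> ipV eta zeta = 0 ->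
  (1 - delta) * (1 - eps) / ((1 + delta) * (1 + eps))
      * sqnorm ipW (T zeta) * sqnorm ipV eta
    <= sqnorm ipW (T eta) * sqnorm ipV zeta
  /\ sqnorm ipW (T eta) * sqnorm ipV zeta
    <= (1 - delta) * (1 + eps) / ((1 + delta) * (1 - eps))
      * sqnorm ipW (T zeta) * sqnorm ipV eta.
Proof.
move=> /andP[d_ge0 d_lt1] /andP[e_ge0 e_lt1] ortho.
set A2 := sqnorm ipV eta; set B2 := sqnorm ipV zeta.
set X2 := sqnorm ipW (T eta); set Y2 := sqnorm ipW (T zeta).
have [oneDd_ge0 oneBd_ge0] : 0 <= 1 + delta /\ 0 <= 1 - delta by split; lra.
pose x := (Num.sqrt ((1 + delta) * B2))%:C *: eta.
pose y := (Num.sqrt ((1 - delta) * A2))%:C *: zeta.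
have xy_orth : ipV x y = 0 by rewrite ipZl // ipZr // ortho !mulr0.
have := sqnorm_gap_orth e_ge0 xy_orth.
rewrite !linearZ /= !sqnormZ // !sqr_sqrtr ?mulr_ge0 ?sqnorm_ge0 // -/A2 -/B2 -/X2 -/Y2.
have gap_eq : (1 + delta) * B2 * A2 - (1 - delta) * A2 * B2
    = delta * ((1 + delta) * B2 * A2 + (1 - delta) * A2 * B2) by ring.
rewrite gap_eq ger0_norm ?mulr_ge0 ?addr_ge0 ?mulr_ge0 ?sqnorm_ge0 // => /(_ (lexx _)).
rewrite ler_norml => /andP[lower upper].
split; rewrite -mulrA mulrAC; [rewrite ler_pdivrMr | rewrite ler_pdivlMr];
  rewrite ?mulr_gt0; lra.
Qed.

End OrthogonalityPreserving.

Theorem corollary3p2 (R : realType) (delta eps : R)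
    (V W : lmodType R[i]) (ipV : V -> V -> R[i]) (ipW : W -> W -> R[i])
    (T : {linear V -> W}) (eta zeta : V) :
  0 <= delta < 1 -> 0 <= eps < 1 ->
  is_inner_product ipV -> is_inner_product ipW ->
  de_orth_preserving ipV ipW delta eps T ->
  eta != 0 -> zeta != 0 -> ipV eta zeta = 0 ->
  sqrtC (((1 - delta) * (1 - eps) / ((1 + delta) * (1 + eps)))%:C)
      * ipnorm ipW (T zeta) * ipnorm ipV eta
    <= ipnorm ipW (T eta) * ipnorm ipV zeta
  /\ ipnorm ipW (T eta) * ipnorm ipV zeta
    <= sqrtC (((1 - delta) * (1 + eps) / ((1 + delta) * (1 - eps)))%:C)
      * ipnorm ipW (T zeta) * ipnorm ipV eta.
Proof.
move=> delta01 eps01 hV hW hT _ _ ortho.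
have [lower upper] := orth_sqnorm_ratio_bounds hV hW hT delta01 eps01 ortho.
set k_lo := _ / (_ * (1 + eps)) in lower *; set k_hi := _ / (_ * (1 - eps)) in upper *.
have [klo_ge0 khi_ge0] : 0 <= k_lo /\ 0 <= k_hi.
  by move: delta01 eps01 => /andP[? ?] /andP[? ?]; split; rewrite divr_ge0 ?mulr_ge0 //; lra.
(* Opaque constants keep [mulr_ge0] from splitting them below. *)
clearbody k_lo k_hi.
rewrite !ipnormE // !sqrtC_real // -!rmorphM !lecR -!sqrtrM ?mulr_ge0 ?sqnorm_ge0 //.
by split; apply: ler_wsqrtr.
Qed.
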